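(* Let $a,b\in\mathbb{Q}_3$ with $\gamma(a)=2$, $\gamma(b)=0$ and $(b_0,b_1)=(1,0)$ or $(2,2)$. Then $x=\sum_{k\ge0}x_k3^k\in\mathbb{Z}_3^*$ is a solution of $x^3+ax=b$ if and only if the congruences $$x_0^3\equiv b_0\pmod3,\qquad x_0^3\equiv b_0+3b_1\pmod 9,$$ $$x_0^2x_1+x_0a_0+M_1(x_0)\equiv b_2\pmod3,$$ $$x_0^2x_2+P_3^2(x_0,x_1)+x_1a_0+x_0a_1+x_0x_1^2+M_2(x_0,x_1)\equiv b_3\pmod3,$$ $$x_0^2x_{k-1}+P_k^{k-1}(x_0,\dots,x_{k-2})+2x_0x_1x_{k-2}+x_{k-2}a_0+x_{k-3}a_1+\dots+x_0a_{k-2}+M_{k-1}(x_0,\dots,x_{k-2})\equiv b_k\pmod3,\quad k\ge4,$$ are fulfilled, where the integers $M_k(x_0,\dots,x_{k-1})$ are defined by $$x_0^3=b_0+3b_1+9M_1(x_0),$$ $$x_0^2x_1+x_0a_0=b_2-M_1(x_0)+3M_2(x_0,x_1),$$ $$x_0^2x_2+P_3^2(x_0,x_1)+x_1a_0+x_0a_1+x_0x_1^2=b_3-M_2(x_0,x_1)+3M_3(x_0,x_1,x_2),$$ $$x_0^2x_{k-1}+P_k^{k-1}(x_0,\dots,x_{k-2})+2x_0x_1x_{k-2}+x_{k-2}a_0+\dots+x_0a_{k-2}=b_k-M_{k-1}(x_0,\dots,x_{k-2})+3M_k(x_0,\dots,x_{k-1}),\quad k\ge4.$$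
   Context: Write $a=3^{\gamma(a)}(a_0+a_13+a_23^2+\dots)$, $b=3^{\gamma(b)}(b_0+b_13+b_23^2+\dots)$ in canonical form, with digits $a_j,b_j\in\{0,1,2\}$, $a_0,b_0\ne0$, $\gamma(a),\gamma(b)\in\mathbb{Z}$. $\mathbb{Z}_3^*$ is the set of $3$-adic units; $x\in\mathbb{Z}_3^*$ is written $x=x_0+x_13+x_23^2+\dots$ with $x_j\in\{0,1,2\}$, $x_0\ne0$. For $j\le k$, $$P_k^j(x_0,\dots,x_{j-1})=\sum\frac{6}{m_0!m_1!\cdots m_{j-1}!}x_0^{m_0}x_1^{m_1}\cdots x_{j-1}^{m_{j-1}},$$ the sum over nonnegative integers $m_0,\dots,m_{j-1}$ with $\sum_{i=0}^{j-1}m_i=3$ and $\sum_{i=1}^{j-1}im_i=k$. *)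

(* 3-adic integers are represented by their digit sequences. *)
From HB Require Import structures.
From mathcomp Require Import all_boot all_order all_algebra.
From mathcomp Require Import intdiv.
Set Implicit Arguments. Unset Strict Implicit. Unset Printing Implicit Defensive.
Import Order.TTheory GRing.Theory Num.Theory.
Local Open Scope ring_scope.

Definition is_digits (d : nat -> nat) : Prop := forall i, (d i < 3)%N.

Definition dg (d : nat -> nat) (i : nat) : int := (d i)%:Z.

Definition trunc (d : nat -> nat) (n : nat) : int :=
  \sum_(i < n) dg d i * 3 ^+ i.

(* For a = 3^2 (a_0 + a_1 3 + ...), b = b_0 + b_1 3 + ..., x = x_0 + x_1 3 + ...
   the equation x^3 + a x = b holds in Q_3 (all three lie in Z_3) iff it holds
   modulo 3^n for every n, i.e. for all truncations. *)
Definition cubic_solution (a b x : nat -> nat) : Prop :=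
  forall n : nat,
    (3 ^+ n %| trunc x n ^+ 3 + 3 ^+ 2 * trunc a n * trunc x n - trunc b n)%Z.

(* P_k^j(x_0,...,x_{j-1}) = sum over (m_0,...,m_{j-1}) with sum m_i = 3 and
   sum i m_i = k of 6/(m_0! ... m_{j-1}!) x_0^{m_0} ... x_{j-1}^{m_{j-1}}.
   (Each m_i <= 3, so m ranges over {ffun 'I_j -> 'I_4}.) *)
Definition P (k j : nat) (x : nat -> int) : int :=
  \sum_(m : {ffun 'I_j -> 'I_4} |
          ((\sum_(i < j) (m i : nat) == 3) && (\sum_(i < j) i * m i == k))%N)
     ((6 %/ \prod_(i < j) (m i : nat)`!)%N)%:Z * \prod_(i < j) x i ^+ (m i : nat).

Definition L (a b x : nat -> nat) (k : nat) : int :=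
  let X := dg x in let A := dg a in
  match k with
  | 2 => X 0 ^+ 2 * X 1 + X 0 * A 0
  | 3 => X 0 ^+ 2 * X 2 + P 3 2 X + X 1 * A 0 + X 0 * A 1 + X 0 * X 1 ^+ 2
  | _ => X 0 ^+ 2 * X k.-1 + P k k.-1 X + 2 * X 0 * X 1 * X (k - 2)%N%N
         + \sum_(i < k.-1) X (k - 2 - i)%N * A i
  end.

(* the integers M_k:
   x_0^3 = b_0 + 3 b_1 + 9 M_1,  L_k = b_k - M_{k-1} + 3 M_k  (k >= 2).
   (Exact division whenever the preceding congruences hold.) *)
Fixpoint M (a b x : nat -> nat) (k : nat) : int :=
  match k with
  | 0 => 0
  | 1 => ((dg x 0 ^+ 3 - dg b 0 - 3 * dg b 1) %/ 9)%Z
  | k'.+1 => ((L a b x k + M a b x k' - dg b k) %/ 3)%Z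
  end.

Definition congruences (a b x : nat -> nat) : Prop :=
  [/\ (dg x 0 ^+ 3 = dg b 0 %[mod 3])%Z,
      (dg x 0 ^+ 3 = dg b 0 + 3 * dg b 1 %[mod 9])%Z &
      forall k : nat, (2 <= k)%N ->
        (L a b x k + M a b x k.-1 = dg b k %[mod 3])%Z].

(* Encode the truncations of x and a as integer polynomials X_n, A_n, so that
   trunc x n ^ 3 + 9 trunc a n trunc x n is the value at 3 of
   Q_n := X_n^3 + T^2 A_n X_n.  The k-th coefficient c_k of Q_n no longer depends
   on n once n > k, and x solves the equation iff sum_{k<n} c_k 3^k = trunc b n
   modulo 3^n for all n.  By the multinomial theorem P_k^j is the k-th
   coefficient of X_j^3, which gives c_0 = x_0^3, c_1 = 3 x_0^2 x_1 and
   c_k = L_k - r_{k-1} + 3 r_k for k >= 2, where 3 r_k collects the terms of c_k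
   that involve x_k or x_{k-1}.  Reading off 3-adic digits with carries M_k then
   shows sum_{k<n+2} c_k 3^k = trunc b (n+2) + 3^(n+2) (M_{n+1} + r_{n+1})
   as long as the earlier congruences hold, and the theorem follows by
   induction on n. *)
From Pilot Require Import Defs.
From mathcomp Require Import all_boot all_order all_algebra.
From mathcomp Require Import zify ring.
Set Implicit Arguments. Unset Strict Implicit. Unset Printing Implicit Defensive.
Import Order.TTheory GRing.Theory Num.Theory.
Local Open Scope ring_scope.

Definition multinom_sum (s k j : nat) (X : nat -> int) : int :=
  \sum_(m : {ffun 'I_j -> 'I_4} |
          ((\sum_(i < j) (m i : nat) == s) && (\sum_(i < j) i * m i == k))%N)
     ((s`! %/ \prod_(i < j) (m i : nat)`!)%N)%:Z * \prod_(i < j) X i ^+ (m i : nat).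

Definition ffun_snoc j (t : 'I_4) (m : {ffun 'I_j -> 'I_4}) : {ffun 'I_j.+1 -> 'I_4} :=
  [ffun i => if unlift ord_max i is Some i' then m i' else t].

Lemma ffun_snoc_bij j :
  bijective (fun p : 'I_4 * {ffun 'I_j -> 'I_4} => ffun_snoc p.1 p.2).
Proof.
exists (fun m : {ffun 'I_j.+1 -> 'I_4} =>
  (m ord_max, [ffun i : 'I_j => m (lift ord_max i)])).
- case=> t m; rewrite /ffun_snoc /= !ffunE unlift_none; congr pair.
  by apply/ffunP=> i; rewrite !ffunE liftK.
- move=> m; apply/ffunP=> i; rewrite /ffun_snoc ffunE /=.
  by case: unliftP => [i' ->|->]; rewrite ?ffunE.
Qed.

Lemma ffun_snoc_widen j t (m : {ffun 'I_j -> 'I_4}) i :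
  ffun_snoc t m (widen_ord (leqnSn j) i) = m i.
Proof.
have -> : widen_ord (leqnSn j) i = lift ord_max i.
  by apply: val_inj => /=; rewrite /bump leqNgt ltn_ord.
by rewrite /ffun_snoc ffunE liftK.
Qed.

Lemma ffun_snoc_max j t (m : {ffun 'I_j -> 'I_4}) : ffun_snoc t m ord_max = t.
Proof. by rewrite /ffun_snoc ffunE unlift_none. Qed.

Lemma big_ffun_snoc j (F : {ffun 'I_j.+1 -> 'I_4} -> int) :
  \sum_m F m = \sum_(t : 'I_4) \sum_(m : {ffun 'I_j -> 'I_4}) F (ffun_snoc t m).
Proof.
rewrite pair_bigA /=.
exact: (reindex (fun p : 'I_4 * _ => ffun_snoc p.1 p.2) (onW_bij _ (ffun_snoc_bij j))).
Qed.

Lemma prod_fact_dvd_fact_sum j (F : 'I_j -> nat) :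
  (\prod_(i < j) (F i)`! %| (\sum_(i < j) F i)`!)%N.
Proof.
elim: j F => [|j IH] F; first by rewrite !big_ord0.
rewrite !big_ord_recr /=.
set S := \sum_(i < j) _; set f := F ord_max.
rewrite -(@bin_fact (S + f) f) ?leq_addl // addnK.
by rewrite mulnCA mulnC dvdn_mul // dvdn_mull.
Qed.

Lemma divn_fact_mul_fact s t Q : (t <= s)%N -> (Q %| (s - t)`!)%N ->
  (s`! %/ (Q * t`!) = 'C(s, t) * ((s - t)`! %/ Q))%N.
Proof.
move=> ts /dvdnP [r er].
have Q_gt0 : (0 < Q)%N.
  by case: Q er => // er; have := fact_gt0 (s - t); rewrite er muln0.
rewrite er mulnK // -(bin_fact ts) er.
have -> : ('C(s, t) * (t`! * (r * Q)) = ('C(s, t) * r) * (Q * t`!))%N by ring.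
by rewrite mulnK // muln_gt0 Q_gt0 fact_gt0.
Qed.

Lemma multinom_sumS s k j X : (s <= 3)%N ->
  multinom_sum s k j.+1 X = \sum_(t < 4 | (t <= s)%N)
     ('C(s, t))%:Z * X j ^+ t *
       (if (j * t <= k)%N then multinom_sum (s - t) (k - j * t) j X else 0).
Proof.
move=> s3; rewrite /multinom_sum big_mkcond big_ffun_snoc /= [RHS]big_mkcond /=.
apply: eq_bigr => t _.
under eq_bigr => m _ do rewrite !big_ord_recr /= !ffun_snoc_max.
under eq_bigr => m _ do under [\sum_(i < j) _]eq_bigr => i _ do rewrite ffun_snoc_widen.
under eq_bigr => m _ do
  under [\sum_(i < j) (i * _)%N]eq_bigr => i _ do rewrite ffun_snoc_widen.
under eq_bigr => m _ do under [\prod_(i < j) _]eq_bigr => i _ do rewrite ffun_snoc_widen.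
under eq_bigr => m _ do
  under [\prod_(i < j) (_ ^+ _)]eq_bigr => i _ do rewrite ffun_snoc_widen.
have [ts|st] := leqP (t : nat) s; last first.
  by apply: big1 => m _; rewrite ifF //; apply/negbTE/nandP; left; apply/eqP; lia.
have [jk|kj] := leqP (j * t) k; last first.
  by rewrite mulr0; apply: big1 => m _; rewrite ifF //; apply/negbTE/nandP; right; apply/eqP; lia.
rewrite mulr_sumr [RHS]big_mkcond; apply: eq_bigr => m _.
have eq_sub u v w : (v <= w)%N -> ((u + v)%N == w) = (u == (w - v)%N).
  by move=> vw; apply/eqP/eqP; lia.
rewrite eq_sub // eq_sub //.
case: ifP => [/andP [/eqP e1 e2]|nc]; last by rewrite ?ifF.
rewrite divn_fact_mul_fact //; last by rewrite -e1 (prod_fact_dvd_fact_sum (fun i => m i : nat)).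
by rewrite PoszM; ring.
Qed.

Definition digit_poly (X : nat -> int) n : {poly int} := \poly_(i < n) X i.

Lemma digit_poly0 X : digit_poly X 0 = 0.
Proof. by rewrite /digit_poly poly_def big_ord0. Qed.

Lemma digit_polyS X j : digit_poly X j.+1 = digit_poly X j + X j *: 'X^j.
Proof. by rewrite /digit_poly !poly_def big_ord_recr. Qed.

Lemma multinom_sum0 s k X :
  multinom_sum s k 0 X = if (s == 0%N) && (k == 0%N) then 1 else 0.
Proof.
rewrite /multinom_sum big_mkcond (big_pred1 [ffun i => ord0]); last first.
  by move=> m; rewrite /= eq_sym; apply/esym/eqP/ffunP => -[i hi].
rewrite !big_ord0 divn1 eq_sym [(0%N == k)]eq_sym.
by case: s => [|s] //=; rewrite mulr1.
Qed.

Lemma multinom_sum_coef s k j X : (s <= 3)%N ->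
  multinom_sum s k j X = (digit_poly X j ^+ s)`_k.
Proof.
elim: j s k => [|j IH] s k s3.
  rewrite multinom_sum0 digit_poly0.
  case: s s3 => [|s] _; first by rewrite expr0 coef1; case: k.
  by rewrite exprS mul0r coef0 andFb.
rewrite multinom_sumS // digit_polyS exprDn coef_sum.
rewrite (big_ord_widen 4 (fun i => ((digit_poly X j ^+ (s - i) *
  (X j *: 'X^j) ^+ i) *+ 'C(s, i))`_k)) //.
apply: eq_bigr => t ts; rewrite IH; last lia.
rewrite coefMn exprZn -exprM -scalerAr coefZ coefMXn ltnNge.
case: (j * t <= k)%N; last by rewrite !mulr0 mul0rn.
by rewrite -mulr_natl natz mulrA.
Qed.

Lemma P_coef k j X : P k j X = (digit_poly X j ^+ 3)`_k.
Proof. exact: multinom_sum_coef. Qed.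

Lemma truncS d n : trunc d n.+1 = trunc d n + dg d n * 3 ^+ n.
Proof. by rewrite /trunc big_ord_recr. Qed.

Lemma trunc_horner d n : trunc d n = (digit_poly (dg d) n).[3].
Proof. by rewrite /digit_poly horner_poly. Qed.

Lemma digit_poly_extend X n d : exists R, digit_poly X (n + d) = digit_poly X n + 'X^n * R.
Proof.
elim: d => [|d [R IH]]; first by exists 0; rewrite addn0 mulr0 addr0.
exists (R + (X (n + d))%:P * 'X^d).
by rewrite addnS digit_polyS IH exprD -mul_polyC; ring.
Qed.

Lemma digit_poly1 X : digit_poly X 1 = (X 0%N)%:P.
Proof. by rewrite digit_polyS digit_poly0 add0r expr0 -mul_polyC mulr1. Qed.

Lemma digit_poly2 X : digit_poly X 2 = (X 0%N)%:P + (X 1%N)%:P * 'X.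
Proof. by rewrite digit_polyS digit_poly1 expr1 -mul_polyC. Qed.

Lemma digit_poly3 X :
  digit_poly X 3 = (X 0%N)%:P + (X 1%N)%:P * 'X + (X 2%N)%:P * 'X^2.
Proof. by rewrite digit_polyS digit_poly2 -mul_polyC. Qed.

Lemma coef_head2 (c0 c1 : int) R i : (c0%:P + c1%:P * 'X + 'X^2 * R)`_i =
  if i == 0%N then c0 else if i == 1%N then c1 else R`_(i - 2).
Proof.
rewrite !coefD coefC coefCM coefX coefXnM.
by case: i => [|[|i]] /=; rewrite ?mulr0 ?mulr1 ?add0r ?addr0.
Qed.

Section CubicDigits.
Variables (a b x : nat -> nat).
Local Notation X := (dg x).
Local Notation A := (dg a).
Local Notation B := (dg b).
Local Notation M := (M a b x).
Local Notation L := (L a b x).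

Definition cubic_poly n : {poly int} :=
  digit_poly X n ^+ 3 + 'X^2 * (digit_poly A n * digit_poly X n).

Definition cubic_coef k := (cubic_poly k.+1)`_k.

Definition cubic_sum n := \sum_(k < n) cubic_coef k * 3 ^+ k.

Lemma cubic_sumS n : cubic_sum n.+1 = cubic_sum n + cubic_coef n * 3 ^+ n.
Proof. by rewrite /cubic_sum big_ord_recr. Qed.

Lemma cubic_coef_stable n k : (k < n)%N -> (cubic_poly n)`_k = cubic_coef k.
Proof.
move=> kn; rewrite /cubic_coef -(subnKC kn).
have [R eR] := digit_poly_extend X k.+1 (n - k.+1).
have [S eS] := digit_poly_extend A k.+1 (n - k.+1).
rewrite /cubic_poly eR eS.
set p := digit_poly X k.+1; set q := digit_poly A k.+1; set z := 'X^(k.+1).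
have -> : (p + z * R) ^+ 3 + 'X^2 * ((q + z * S) * (p + z * R)) =
   (p ^+ 3 + 'X^2 * (q * p)) + z * (3 * p ^+ 2 * R + 3 * p * z * R ^+ 2
     + z ^+ 2 * R ^+ 3 + 'X^2 * (q * R + S * p + z * S * R)) by ring.
by rewrite coefD coefXnM ltnSn addr0.
Qed.

Lemma cubic_poly_horner_mod n : (3 ^+ n %| (cubic_poly n).[3] - cubic_sum n)%Z.
Proof.
rewrite -{1}(poly_take_drop n (cubic_poly n)) hornerD hornerM hornerXn.
have -> : take_poly n (cubic_poly n) = \poly_(i < n) (cubic_poly n)`_i.
  by apply/polyP => i; rewrite coef_take_poly.
rewrite horner_poly /cubic_sum (eq_bigr (fun k : 'I_n => cubic_coef k * 3 ^+ k)).
  by rewrite addrAC subrr add0r dvdz_mull.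
by move=> i _; rewrite cubic_coef_stable.
Qed.

Lemma cubic_solution_sum_iff n :
  (3 ^+ n %| trunc x n ^+ 3 + 3 ^+ 2 * trunc a n * trunc x n - trunc b n)%Z
  <-> (3 ^+ n %| cubic_sum n - trunc b n)%Z.
Proof.
have -> : trunc x n ^+ 3 + 3 ^+ 2 * trunc a n * trunc x n = (cubic_poly n).[3].
  by rewrite /cubic_poly !trunc_horner !hornerE.
have h := cubic_poly_horner_mod n.
have -> : (cubic_poly n).[3] - trunc b n =
  ((cubic_poly n).[3] - cubic_sum n) + (cubic_sum n - trunc b n) by ring.
by rewrite rpredDl.
Qed.

Definition cube_excess k : int :=
  match k with
  | 0 => 0
  | 1 => X 0%N ^+ 2 * X 1%N
  | 2 => X 0%N ^+ 2 * X 2%N + X 0%N * X 1%N ^+ 2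
  | k'.+1 => X 0%N ^+ 2 * X k + 2 * X 0%N * X 1%N * X k'
  end.

Lemma cubic_coef0 : cubic_coef 0 = X 0%N ^+ 3.
Proof.
rewrite /cubic_coef /cubic_poly !digit_poly1.
have -> : (X 0%N)%:P ^+ 3 + 'X^2 * ((A 0%N)%:P * (X 0%N)%:P) =
   (X 0%N ^+ 3)%:P + 0%:P * 'X + 'X^2 * (A 0%N * X 0%N)%:P by ring.
by rewrite coef_head2.
Qed.

Lemma cubic_coef1 : cubic_coef 1 = 3 * cube_excess 1.
Proof.
rewrite /cubic_coef /cubic_poly (digit_poly2 X).
set x0 := X 0%N; set x1 := X 1%N.
have -> : (x0%:P + x1%:P * 'X) ^+ 3 + 'X^2 * (digit_poly A 2 * (x0%:P + x1%:P * 'X)) =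
   (x0 ^+ 3)%:P + (3 * (x0 ^+ 2 * x1))%:P * 'X + 'X^2 *
     ((3 * x0 * x1 ^+ 2)%:P + (x1 ^+ 3)%:P * 'X
      + digit_poly A 2 * (x0%:P + x1%:P * 'X)) by ring.
by rewrite coef_head2.
Qed.

Lemma cube_coef2 :
  (digit_poly X 3 ^+ 3)`_2 = 3 * X 0%N ^+ 2 * X 2%N + 3 * X 0%N * X 1%N ^+ 2.
Proof.
rewrite digit_poly3; set x0 := X 0%N; set x1 := X 1%N; set x2 := X 2%N.
have -> : (x0%:P + x1%:P * 'X + x2%:P * 'X^2) ^+ 3 =
  (x0 ^+ 3)%:P + 'X^1 * ((3 * x0 ^+ 2 * x1)%:P
   + (3 * x0 ^+ 2 * x2 + 3 * x0 * x1 ^+ 2)%:P * 'X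
   + 'X^2 * ((6 * x0 * x1 * x2 + x1 ^+ 3)%:P + (3 * x0 * x2 ^+ 2 + 3 * x1 ^+ 2 * x2)%:P * 'X
   + (3 * x1 * x2 ^+ 2)%:P * 'X^2 + (x2 ^+ 3)%:P * 'X^3)) by ring.
by rewrite coefD coefC coefXnM /= coef_head2.
Qed.

(* Adjoining x_{j+2} T^{j+2} + x_{j+3} T^{j+3} changes the coefficient of
   T^{j+3} of the cube only through 3 x_0^2 x_{j+3} + 6 x_0 x_1 x_{j+2}. *)
Lemma cube_coef_high j : (digit_poly X j.+4 ^+ 3)`_j.+3 =
  (digit_poly X j.+2 ^+ 3)`_j.+3 + 3 * X 0%N ^+ 2 * X j.+3 + 6 * X 0%N * X 1%N * X j.+2.
Proof.
have [R eR] := digit_poly_extend X 2 j.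
rewrite (digit_polyS X j.+3) (digit_polyS X j.+2) -!mul_polyC.
set p := digit_poly X j.+2.
have ep : p = (X 0%N)%:P + (X 1%N)%:P * 'X + 'X^2 * R by rewrite /p -digit_poly2.
have ez2 : ('X^(j.+2) : {poly int}) = 'X^2 * 'X^j by rewrite -exprD.
have ez3 : ('X^(j.+3) : {poly int}) = 'X^2 * 'X^j * 'X by rewrite -exprD -exprSr.
rewrite ez3 ez2.
set u := ('X^j : {poly int}); set al := X j.+2; set be := X j.+3.
set x0 := X 0%N; set x1 := X 1%N.
have expand p' : p' = x0%:P + x1%:P * 'X + 'X^2 * R ->
  (p' + al%:P * ('X^2 * u) + be%:P * ('X^2 * u * 'X)) ^+ 3 =
  p' ^+ 3 + ('X^2 * u) * ((3 * x0 ^+ 2 * al)%:P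
    + (3 * x0 ^+ 2 * be + 6 * x0 * x1 * al)%:P * 'X
    + 'X^2 * (3 * ((2 * x0 * x1 * be)%:P + (x1 ^+ 2 * al)%:P + (x1 ^+ 2 * be)%:P * 'X
        + (2 * (x0%:P + x1%:P * 'X) * R + 'X^2 * R ^+ 2) * (al%:P + be%:P * 'X))
      + u * (3 * p' * (al%:P + be%:P * 'X) ^+ 2 + 'X^2 * u * (al%:P + be%:P * 'X) ^+ 3))).
  by move->; ring.
rewrite (expand p ep) coefD -ez2 coefXnM ltnNge leqnSn /= !subSS subSnn coef_head2 /=.
ring.
Qed.

Lemma coef_linear_part j :
  (digit_poly A j.+3 * digit_poly X j.+3)`_j = \sum_(i < j.+1) X (j - i)%N * A i.
Proof.
rewrite coefM; apply: eq_bigr => i _.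
have hi := ltn_ord i.
by rewrite !coef_poly ifT ?ifT 1?mulrC; lia.
Qed.

Lemma cubic_coef_split j : cubic_coef j.+2 =
  (digit_poly X j.+3 ^+ 3)`_j.+2 + (digit_poly A j.+3 * digit_poly X j.+3)`_j.
Proof. by rewrite /cubic_coef /cubic_poly coefD coefXnM /= !subSS subn0. Qed.

Lemma cubic_coefE k :
  cubic_coef k.+2 = L k.+2 - cube_excess k.+1 + 3 * cube_excess k.+2.
Proof.
rewrite cubic_coef_split coef_linear_part.
case: k => [|[|j]].
- by rewrite cube_coef2 big_ord1 /Defs.L /=; ring.
- by rewrite cube_coef_high !big_ord_recr big_ord0 /Defs.L /= P_coef; ring.
- rewrite cube_coef_high /Defs.L /= P_coef.
  by rewrite (_ : (j.+4 - 2 = j.+2)%N) ?subn2 //; ring.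
Qed.

Lemma cubic_sum2 : cubic_sum 2 = X 0%N ^+ 3 + 9 * cube_excess 1.
Proof. by rewrite !cubic_sumS /cubic_sum big_ord0 cubic_coef0 cubic_coef1 /=; ring. Qed.

Definition digit_congruence k := (3 %| L k + M k.-1 - B k)%Z.

Hypothesis carry1 : (9 %| X 0%N ^+ 3 - B 0%N - 3 * B 1%N)%Z.

(* Exactness of the divisions defining M turns every congruence into an
   equation, and the equations telescope. *)
Lemma cubic_sum_carry n : (forall k, (2 <= k < n.+2)%N -> digit_congruence k) ->
  cubic_sum n.+2 = trunc b n.+2 + 3 ^+ n.+2 * (M n.+1 + cube_excess n.+1).
Proof.
elim: n => [|n IH] Hk.
  have eM : M 1 * 9 = X 0%N ^+ 3 - B 0%N - 3 * B 1%N by rewrite /= divzK.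
  set m1 := M 1 in eM *.
  rewrite cubic_sum2 !truncS /trunc big_ord0 /=.
  rewrite (_ : X 0%N ^+ 3 = m1 * 9 + B 0%N + 3 * B 1%N); last by rewrite eM; ring.
  by ring.
rewrite cubic_sumS IH; last by move=> k /andP [k2 kn]; apply: Hk; rewrite k2 ltnW.
rewrite cubic_coefE (truncS b n.+2).
have eM : M n.+2 * 3 = L n.+2 + M n.+1 - B n.+2.
  by rewrite /= divzK //; apply: Hk; rewrite /= ltnSn.
rewrite (_ : L n.+2 = M n.+2 * 3 - M n.+1 + B n.+2); last by rewrite eM; ring.
by rewrite (exprS _ n.+2); ring.
Qed.

Lemma digit_congruence_next n :
  (forall k, (2 <= k < n.+2)%N -> digit_congruence k) ->
  (3 ^+ n.+3 %| cubic_sum n.+3 - trunc b n.+3)%Z -> digit_congruence n.+2.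
Proof.
move=> Hk.
rewrite cubic_sumS cubic_sum_carry // cubic_coefE (truncS b n.+2).
have -> : trunc b n.+2 + 3 ^+ n.+2 * (M n.+1 + cube_excess n.+1) +
    (L n.+2 - cube_excess n.+1 + 3 * cube_excess n.+2) * 3 ^+ n.+2
    - (trunc b n.+2 + B n.+2 * 3 ^+ n.+2)
  = 3 ^+ n.+2 * ((L n.+2 + M n.+1 - B n.+2) + 3 * cube_excess n.+2) by ring.
by rewrite (exprSr _ n.+2) dvdz_mul2l ?expf_neq0 // rpredDr // dvdz_mulr.
Qed.

End CubicDigits.

Lemma eqz_modP d u v : (u = v %[mod d])%Z <-> (d %| u - v)%Z.
Proof. by rewrite -eqz_mod_dvd; split => [->|/eqP]. Qed.

Lemma cubic_solution_congruences (a b x : nat -> nat) :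
  cubic_solution a b x -> congruences a b x.
Proof.
move=> sol; have {}sol n := (cubic_solution_sum_iff a b x n).1 (sol n).
have h1 : (3 %| dg x 0 ^+ 3 - dg b 0)%Z.
  move: (sol 1%N); rewrite /cubic_sum /trunc !big_ord1 cubic_coef0 /=.
  by rewrite !expr1 !mulr1.
have h2 : (9 %| dg x 0 ^+ 3 - dg b 0 - 3 * dg b 1)%Z.
  move: (sol 2%N); rewrite cubic_sum2 !truncS /trunc big_ord0 /=.
  have -> : dg x 0 ^+ 3 + 9 * cube_excess x 1 - (0 + dg b 0 * 3 ^+ 0 + dg b 1 * 3 ^+ 1)
    = 9 * cube_excess x 1 + (dg x 0 ^+ 3 - dg b 0 - 3 * dg b 1) by ring.
  by rewrite rpredDl // dvdz_mulr.
have hk n k : (2 <= k < n.+2)%N -> digit_congruence a b x k.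
  elim: n k => [|n IH] k /andP [k2 kn]; first by rewrite ltnNge k2 in kn.
  have [kn'|nk] := ltnP k n.+2; first by apply: IH; rewrite k2.
  rewrite (_ : k = n.+2); last by apply/eqP; rewrite eqn_leq nk -ltnS kn.
  exact: digit_congruence_next.
split; [exact/eqz_modP | by apply/eqz_modP; rewrite opprD addrA |].
by move=> k k2; apply/eqz_modP/(hk k); rewrite k2 /=.
Qed.

Lemma congruences_cubic_solution (a b x : nat -> nat) :
  congruences a b x -> cubic_solution a b x.
Proof.
case=> /eqz_modP h1 /eqz_modP h2 hk n; rewrite opprD addrA in h2.
apply/cubic_solution_sum_iff; case: n => [|[|n]].
- by rewrite expr0 dvd1z.
- by rewrite /cubic_sum /trunc !big_ord1 cubic_coef0 /= !expr1 !mulr1.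
- rewrite (cubic_sum_carry h2); first by rewrite addrAC subrr add0r dvdz_mulr.
  by move=> k /andP [k2 _]; apply/eqz_modP/hk.
Qed.

Theorem theorem3p4 (a b x : nat -> nat) :
  is_digits a -> (a 0 != 0)%N ->
  is_digits b -> (b 0 != 0)%N ->
  ((b 0%N, b 1%N) = (1, 0)%N \/ (b 0%N, b 1%N) = (2, 2)%N) ->
  is_digits x -> (x 0 != 0)%N ->
  (cubic_solution a b x <-> congruences a b x).
Proof.
move=> *; split; [exact: cubic_solution_congruences | exact: congruences_cubic_solution].
Qed.
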